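(* Let $(\mathscr{S},\mathscr{C},\mathscr{R},K)$ be a PL-RDK system containing an irreversible inflow reaction $0\to A$ (so $A\to 0\notin\mathscr{R}$). Let $\mathcal{D}$ be the set of all reactions other than $0\to A$ in which $A$ occurs in the reactant or the product complex. If for every $y\to y'\in\mathcal{D}$ the $A$-coordinate of the reaction vector $y'-y$ is zero, then the system does not have the capacity to admit multiple equilibria.
   Context: In a PL-RDK system each reaction $y\to y'$ has rate $k_{y\to y'}x^{T_{.y}}$ with $k_{y\to y'}>0$ and a real kinetic order vector $T_{.y}$ depending only on the reactant complex $y$; the dynamics is $dx/dt=\sum_{\mathscr{R}}k_{y\to y'}x^{T_{.y}}(y'-y)$. The stoichiometric subspace is $S=\mathrm{span}\{y'-y\}$. The system has the capacity to admit multiple equilibria if there exist positive rate constants for which there are two distinct positive equilibria $c^*,c^{**}$ with $c^*-c^{**}\in S$. Here $0$ denotes the zero complex and $A$ the complex consisting of one unit of species $A$. *)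

From mathcomp Require Import all_boot.
From Stdlib Require Import Reals.
Set Implicit Arguments. Unset Strict Implicit. Unset Printing Implicit Defensive.

Definition cplx (n : nat) := {ffun 'I_n -> nat}.
Definition reaction (n : nat) := (cplx n * cplx n)%type.

Definition zero_cplx (n : nat) : cplx n := [ffun _ => 0%N].
Definition unit_cplx (n : nat) (a : 'I_n) : cplx n := [ffun i => nat_of_bool (i == a)].

Definition is_network (n : nat) (rs : seq (reaction n)) : Prop :=
  uniq rs /\ (forall r, r \in rs -> r.1 != r.2).

Definition plmon (n : nat) (x : 'I_n -> R) (t : 'I_n -> R) : R :=
  \big[Rmult/1%R]_(i < n) Rpower (x i) (t i).

(* PL-RDK vector field: kinetic orders T : cplx n -> 'I_n -> R depend only on
   the reactant complex; k are the rate constants. *)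
Definition plrdk_field (n : nat) (rs : seq (reaction n)) (T : cplx n -> 'I_n -> R)
  (k : reaction n -> R) (x : 'I_n -> R) (i : 'I_n) : R :=
  \big[Rplus/0%R]_(r <- rs)
     (k r * plmon x (T r.1) * (INR (r.2 i) - INR (r.1 i)))%R.

Definition positive_equilibrium (n : nat) (rs : seq (reaction n))
  (T : cplx n -> 'I_n -> R) (k : reaction n -> R) (c : 'I_n -> R) : Prop :=
  (forall i, 0 < c i)%R /\ (forall i, plrdk_field rs T k c i = 0%R).

Definition in_stoich_subspace (n : nat) (rs : seq (reaction n)) (v : 'I_n -> R) : Prop :=
  exists coef : reaction n -> R,
    forall i, v i = \big[Rplus/0%R]_(r <- rs) (coef r * (INR (r.2 i) - INR (r.1 i)))%R.

Definition has_capacity_multiple_equilibria (n : nat) (rs : seq (reaction n))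
  (T : cplx n -> 'I_n -> R) : Prop :=
  exists k : reaction n -> R,
    (forall r, r \in rs -> 0 < k r)%R /\
    exists c1 c2 : 'I_n -> R,
      positive_equilibrium rs T k c1 /\ positive_equilibrium rs T k c2 /\
      (exists i, c1 i <> c2 i) /\
      in_stoich_subspace rs (fun i => c1 i - c2 i)%R.

From mathcomp Require Import all_boot.
From Stdlib Require Import Reals Lra.

Set Implicit Arguments.
Unset Strict Implicit.
Unset Printing Implicit Defensive.

(* The inflow reaction 0 -> A is the only reaction whose
   reaction vector has a nonzero A-coordinate: by hypothesis every other
   reaction involving A leaves the amount of A unchanged, and reactions not
   involving A trivially do so.  Hence the A-component of the PL-RDK vector
   field at any positive state x reduces to the single inflow term
   k_{0->A} x^{T_{.0}}, which is strictly positive because rate constants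
   are positive and power-law monomials of positive states are positive.
   So the system has no positive equilibrium at all, a fortiori not two. *)

Lemma big_uniq_single (A : eqType) (s : seq A) (r0 : A) (F : A -> R) :
  uniq s -> r0 \in s -> (forall r, r \in s -> r != r0 -> F r = 0%R) ->
  \big[Rplus/0%R]_(r <- s) F r = F r0.
Proof.
elim: s => [//|x s IH] /= /andP[xNs us]; rewrite in_cons big_cons.
move=> r0_in Fvanish.
have Fvanish_s r : r \in s -> r != r0 -> F r = 0%R.
  by move=> rs; apply: Fvanish; rewrite in_cons rs orbT.
have [r0x|r0Nx] := eqVneq r0 x.
- have -> : \big[Rplus/0%R]_(r <- s) F r = 0%R.
    rewrite big_seq; elim/big_rec: _ => [//|r y rs ->].
    by rewrite Fvanish_s //; [lra | apply: contraNneq xNs => r_r0; rewrite -r0x -r_r0].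
  by rewrite r0x; lra.
- move: r0_in; rewrite (negbTE r0Nx) /= => r0s.
  rewrite IH // Fvanish ?mem_head // 1?eq_sym //; lra.
Qed.

(* Power-law monomials are positive: each factor x_i^{t_i} is an exponential. *)
Lemma plmon_pos (n : nat) (x t : 'I_n -> R) : (0 < plmon x t)%R.
Proof.
rewrite /plmon; elim/big_ind: _ => [|u v|i _]; first lra.
- exact: Rmult_lt_0_compat.
- exact: exp_pos.
Qed.

Section InflowSpecies.

Variables (n : nat) (rs : seq (reaction n)) (a : 'I_n).

Let inflow : reaction n := (zero_cplx n, unit_cplx a).

Hypothesis rs_uniq : uniq rs.
Hypothesis inflow_in : inflow \in rs.
Hypothesis A_conserved : forall r, r \in rs -> r != inflow ->
  (0 < r.1 a)%N || (0 < r.2 a)%N -> r.2 a = r.1 a.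

Lemma A_coord_zero r : r \in rs -> r != inflow -> r.2 a = r.1 a.
Proof.
move=> r_in rNinflow.
case: (boolP ((0 < r.1 a)%N || (0 < r.2 a)%N)) => [|]; first exact: A_conserved.
by rewrite negb_or -!eqn0Ngt => /andP[/eqP -> /eqP ->].
Qed.

Lemma field_A_inflow (T : cplx n -> 'I_n -> R) (k : reaction n -> R)
    (x : 'I_n -> R) :
  plrdk_field rs T k x a = (k inflow * plmon x (T (zero_cplx n)))%R.
Proof.
rewrite /plrdk_field (big_uniq_single rs_uniq inflow_in).
  by rewrite /= !ffunE eqxx /=; lra.
by move=> r r_in rNinflow; rewrite A_coord_zero // Rminus_diag; lra.
Qed.

Lemma no_positive_equilibrium (T : cplx n -> 'I_n -> R) (k : reaction n -> R)
    (c : 'I_n -> R) :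
  (forall r, r \in rs -> 0 < k r)%R -> ~ positive_equilibrium rs T k c.
Proof.
move=> k_pos [_ equil]; have := equil a; rewrite field_A_inflow.
have := Rmult_lt_0_compat _ _ (k_pos _ inflow_in) (plmon_pos c (T (zero_cplx n))).
lra.
Qed.

End InflowSpecies.

Theorem propositionE1 (n : nat) (rs : seq (reaction n))
  (T : cplx n -> 'I_n -> R) (a : 'I_n) :
  is_network rs ->
  (zero_cplx n, unit_cplx a) \in rs ->
  (unit_cplx a, zero_cplx n) \notin rs ->
  (forall r, r \in rs -> r != (zero_cplx n, unit_cplx a) ->
     (0 < r.1 a)%N || (0 < r.2 a)%N -> r.2 a = r.1 a) ->
  ~ has_capacity_multiple_equilibria rs T.
Proof.
move=> [rs_uniq _] inflow_in _ A_conserved [k [k_pos [c1 [_ [equil1 _]]]]].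
exact: (no_positive_equilibrium rs_uniq inflow_in A_conserved k_pos equil1).
Qed.
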